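(* For all $x,y\ge 1$ with $x\ne y$ and all $n\ge\max(x,y)$, the $(x,y)$ edge-removal process on $n$ vertices does not necessarily result in an $(x,y)$ task-dependency graph; that is, with positive probability its result is not an $(x,y)$ task-dependency graph.
   Context: A task-dependency graph is a finite directed acyclic graph (no loops, no multiple edges). A vertex is initial if it has in-degree $0$ and terminal if it has out-degree $0$ (an isolated vertex is both). An $(x,y)$ task-dependency graph has exactly $x$ initial and exactly $y$ terminal vertices. The $(x,y)$ edge-removal process on $n$ vertices: start with the task-dependency graph on $\{1,\dots,n\}$ having all edges $(a,b)$ with $a<b$. Edges are removed uniformly at random, one at a time; a removal that would cause more than $x$ initial vertices or more than $y$ terminal vertices is cancelled. The process terminates when no further edge can be removed. *)

From HB Require Import structures.
From mathcomp Require Import all_boot all_order all_algebra.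
Set Implicit Arguments. Unset Strict Implicit. Unset Printing Implicit Defensive.
Import Order.TTheory GRing.Theory Num.Theory.

(* A directed graph on the vertex set 'I_n (standing for {1,...,n}) is given
   by its edge set: a finite set of ordered pairs (a,b) meaning a -> b. *)
Definition graph (n : nat) := {set 'I_n * 'I_n}.

Definition edge_rel n (G : graph n) : rel 'I_n := fun a b => (a, b) \in G.

(* Acyclic: no edge (a,b) with b reaching a (this also excludes loops). *)
Definition acyclic n (G : graph n) : bool :=
  [forall a, forall b, ((a, b) \in G) ==> ~~ connect (edge_rel G) b a].

Definition initial_vertices n (G : graph n) : {set 'I_n} :=
  [set v | [forall u, (u, v) \notin G]].
Definition terminal_vertices n (G : graph n) : {set 'I_n} :=
  [set v | [forall w, (v, w) \notin G]].

Definition is_xy_tdg (x y n : nat) (G : graph n) : bool :=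
  [&& acyclic G, #|initial_vertices G| == x & #|terminal_vertices G| == y].

Definition complete_dag (n : nat) : graph n := [set e : 'I_n * 'I_n | (e.1 < e.2)%N].

(* An edge whose removal is not cancelled. *)
Definition removable (x y n : nat) (G : graph n) (e : 'I_n * 'I_n) : bool :=
  [&& e \in G, #|initial_vertices (G :\ e)| <= x
             & #|terminal_vertices (G :\ e)| <= y].

Definition removable_set (x y n : nat) (G : graph n) : {set 'I_n * 'I_n} :=
  [set e | removable x y G e].

(* Probability that the (x,y) edge-removal process started from G ends in a
   graph satisfying P.  Edges are drawn uniformly among remaining edges and
   cancelled draws leave the state unchanged, so each step is a uniformly
   random non-cancelled removal; the process stops when no edge is removable.
   [fuel] bounds the number of steps (each step removes one edge, so
   fuel = #|G| suffices). *)
Fixpoint end_prob (x y n : nat) (fuel : nat) (P : pred (graph n)) (G : graph n)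
    : rat :=
  match fuel with
  | 0 => (P G)%:R
  | f.+1 =>
      let R := removable_set x y G in
      if R == set0 then (P G)%:R
      else (\sum_(e in R) end_prob x y f P (G :\ e)) / (#|R|)%:R
  end%R.

Definition process_prob (x y n : nat) (P : pred (graph n)) : rat :=
  end_prob x y #|complete_dag n| P (complete_dag n).

From mathcomp Require Import all_boot all_order all_algebra zify.
Set Implicit Arguments.
Unset Strict Implicit.
Unset Printing Implicit Defensive.
Import GRing.Theory Num.Theory.

(* Let m = min(x, y) and let S be the path 0 -> 1 -> ... -> n - m followed by
   m - 1 isolated vertices: S has exactly m initial and m terminal vertices,
   so it is not an (x, y) task-dependency graph because x <> y.  Initial and
   terminal vertices can only appear when edges are removed, so from any
   supergraph of S every edge outside S may be removed; removing the edges
   outside S one by one is therefore a run of the process with positive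
   probability.  Once at S, removing a path edge creates a new initial and a
   new terminal vertex, giving m + 1 > min(x, y) of one kind, so the process
   stops at S. *)

Lemma card_ord_interval n a b : a <= b <= n ->
  #|[set v : 'I_n | a <= v < b]| = b - a.
Proof.
case/andP=> le_ab le_bn.
rewrite -sum1_card (eq_bigl (fun v : 'I_n => a <= v < b)) => [|v]; last by rewrite inE.
rewrite -(big_mkord (fun i => a <= i < b) (fun _ => 1)).
by rewrite -[RHS]muln1 -sum_nat_const_nat (big_nat_widenl a 0) // (big_nat_widen _ b n).
Qed.

Section InitialTerminal.

Variables (n : nat) (G : graph n).

Lemma initial_verticesS (H : graph n) :
  G \subset H -> initial_vertices H \subset initial_vertices G.
Proof.
move/subsetP=> sGH; apply/subsetP => v; rewrite !inE => /forallP noin.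
by apply/forallP => u; apply: contra (noin u); apply: sGH.
Qed.

Lemma terminal_verticesS (H : graph n) :
  G \subset H -> terminal_vertices H \subset terminal_vertices G.
Proof.
move/subsetP=> sGH; apply/subsetP => v; rewrite !inE => /forallP noout.
by apply/forallP => w; apply: contra (noout w); apply: sGH.
Qed.

Lemma card_initial_verticesD1 (e : 'I_n * 'I_n) :
  e \in G -> (forall u, (u, e.2) \in G -> u = e.1) ->
  #|initial_vertices (G :\ e)| = #|initial_vertices G|.+1.
Proof.
move=> eG in_e2; have e2_notin : e.2 \notin initial_vertices G.
  by rewrite inE negb_forall; apply/existsP; exists e.1; rewrite negbK -surjective_pairing.
suff -> : initial_vertices (G :\ e) = e.2 |: initial_vertices G.
  by rewrite cardsU1 e2_notin.
apply/setP => v.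
rewrite !inE; case: eqP => [-> | ne_ve2] /=.
- apply/forallP => u; rewrite !inE negb_and negbK; apply/orP.
  case: (boolP ((u, e.2) \in G)) => [/in_e2 -> | _]; last by right.
  by left; rewrite -surjective_pairing.
- apply: eq_forallb => u; rewrite !inE negb_and negbK.
  by case: eqP => [ue | _] //=; case: ne_ve2; rewrite -ue.
Qed.

Lemma card_terminal_verticesD1 (e : 'I_n * 'I_n) :
  e \in G -> (forall w, (e.1, w) \in G -> w = e.2) ->
  #|terminal_vertices (G :\ e)| = #|terminal_vertices G|.+1.
Proof.
move=> eG out_e1; have e1_notin : e.1 \notin terminal_vertices G.
  by rewrite inE negb_forall; apply/existsP; exists e.2; rewrite negbK -surjective_pairing.
suff -> : terminal_vertices (G :\ e) = e.1 |: terminal_vertices G.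
  by rewrite cardsU1 e1_notin.
apply/setP => v.
rewrite !inE; case: eqP => [-> | ne_ve1] /=.
- apply/forallP => w; rewrite !inE negb_and negbK; apply/orP.
  case: (boolP ((e.1, w) \in G)) => [/out_e1 -> | _]; last by right.
  by left; rewrite -surjective_pairing.
- apply: eq_forallb => w; rewrite !inE negb_and negbK.
  by case: eqP => [we | _] //=; case: ne_ve1; rewrite -we.
Qed.

End InitialTerminal.

Definition path_graph n k : graph n :=
  [set e : 'I_n * 'I_n | (e.2 == (e.1).+1 :> nat) && (e.2 <= k)].

Section PathGraph.

Variables n k : nat.

Lemma path_graph_sub_complete_dag : path_graph n k \subset complete_dag n.
Proof. by apply/subsetP => e; rewrite !inE => /andP[/eqP -> _]. Qed.

Lemma path_graph_in_uniq (u v w : 'I_n) :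
  (u, w) \in path_graph n k -> (v, w) \in path_graph n k -> u = v.
Proof.
rewrite !inE => /andP[/eqP uw _] /andP[/eqP vw _].
by apply/val_inj/succn_inj; rewrite -uw -vw.
Qed.

Lemma path_graph_out_uniq (u v w : 'I_n) :
  (u, v) \in path_graph n k -> (u, w) \in path_graph n k -> v = w.
Proof.
rewrite !inE => /andP[/eqP uv _] /andP[/eqP uw _].
by apply/val_inj; rewrite /= uv uw.
Qed.

Lemma initial_vertices_path_graph :
  initial_vertices (path_graph n k) = ~: [set v : 'I_n | 1 <= v < k.+1].
Proof.
apply/setP => v; rewrite !inE; apply/forallP/idP => [noin | out_v u].
- apply: contraT; rewrite negbK => /andP[v_gt0 v_le_k].
  have pred_v_lt_n : v.-1 < n by rewrite (leq_ltn_trans (leq_pred v)).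
  by have := noin (Ordinal pred_v_lt_n); rewrite inE /= prednK // eqxx -ltnS v_le_k.
- by apply: contra out_v; rewrite inE /= => /andP[/eqP ->].
Qed.

Lemma terminal_vertices_path_graph : k < n ->
  terminal_vertices (path_graph n k) = ~: [set v : 'I_n | 0 <= v < k].
Proof.
move=> lt_kn; apply/setP => v; rewrite !inE; apply/forallP/idP => [noout | out_v w].
- apply: contraT; rewrite negbK /= => lt_vk.
  have succ_v_lt_n : v.+1 < n by rewrite (leq_ltn_trans lt_vk).
  by have := noout (Ordinal succ_v_lt_n); rewrite inE /= eqxx lt_vk.
- by apply: contra out_v; rewrite inE /= => /andP[/eqP ->].
Qed.

Hypothesis lt_kn : k < n.

Lemma card_initial_vertices_path_graph :
  #|initial_vertices (path_graph n k)| = n - k.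
Proof.
rewrite initial_vertices_path_graph cardsCs setCK card_ord.
by rewrite card_ord_interval ?subn1.
Qed.

Lemma card_terminal_vertices_path_graph :
  #|terminal_vertices (path_graph n k)| = n - k.
Proof.
rewrite terminal_vertices_path_graph // cardsCs setCK card_ord.
by rewrite card_ord_interval ?subn0 // (ltnW lt_kn).
Qed.

End PathGraph.

Section Process.

Variables (x y n : nat) (P : pred (graph n)).

Lemma end_prob_ge0 f G : (0 <= end_prob x y f P G)%R.
Proof.
elim: f G => [|f IH] G /=; first exact: ler0n.
case: ifP => _; first exact: ler0n.
by rewrite divr_ge0 ?ler0n ?sumr_ge0.
Qed.

Lemma end_prob_stuck f G :
  removable_set x y G = set0 -> end_prob x y f P G = ((P G)%:R)%R.
Proof. by case: f => [|f] //= ->; rewrite eqxx. Qed.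

Lemma end_prob_gt0_removeD1 f G e : e \in removable_set x y G ->
  (0 < end_prob x y f P (G :\ e))%R -> (0 < end_prob x y f.+1 P G)%R.
Proof.
move=> e_rem pos_e /=; have /negPf -> : removable_set x y G != set0.
  by apply/set0Pn; exists e.
apply: divr_gt0; last by rewrite ltr0n card_gt0; apply/set0Pn; exists e.
rewrite (bigD1 e) //= ltr_pwDl // sumr_ge0 // => e' _.
exact: end_prob_ge0.
Qed.

Lemma removable_outside (S H : graph n) e :
  #|initial_vertices S| <= x -> #|terminal_vertices S| <= y ->
  S \subset H -> e \in H -> e \notin S -> removable x y H e.
Proof.
move=> init_S term_S sSH eH e_notin_S.
have sSHe : S \subset H :\ e by rewrite subsetD1 sSH e_notin_S.
rewrite /removable eH (leq_trans _ init_S) ?(leq_trans _ term_S) ?subset_leq_card //.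
- exact: terminal_verticesS.
- exact: initial_verticesS.
Qed.

Variable S : graph n.
Hypotheses (init_S : #|initial_vertices S| <= x) (term_S : #|terminal_vertices S| <= y).
Hypotheses (stuck_S : removable_set x y S = set0) (P_S : P S).

Lemma end_prob_gt0_supergraph f (H : graph n) :
  S \subset H -> #|H :\: S| <= f -> (0 < end_prob x y f P H)%R.
Proof.
elim: f H => [|f IH] H sSH card_HS.
  have -> : H = S by apply/eqP; rewrite eqEsubset sSH andbT -setD_eq0 -cards_eq0 -leqn0.
  by rewrite end_prob_stuck // P_S ltr01.
have [sHS | /subsetPn[e eH e_notin_S]] := boolP (H \subset S).
  have -> : H = S by apply/eqP; rewrite eqEsubset sSH sHS.
  by rewrite end_prob_stuck // P_S ltr01.
apply: (end_prob_gt0_removeD1 (e := e)).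
  by rewrite inE (removable_outside init_S term_S sSH).
apply: IH; first by rewrite subsetD1 sSH e_notin_S.
have e_HS : e \in H :\: S by rewrite inE e_notin_S.
move: card_HS; rewrite setDDl setUC -setDDl (cardsD1 e (H :\: S)) e_HS.
lia.
Qed.

Lemma process_prob_gt0 : S \subset complete_dag n -> (0 < process_prob x y P)%R.
Proof. by move=> sSK; rewrite end_prob_gt0_supergraph // subset_leq_card ?subsetDl. Qed.

End Process.

Lemma removable_set_path_graph x y n k : k < n -> n - k = minn x y ->
  removable_set x y (path_graph n k) = set0.
Proof.
move=> lt_kn card_S; apply/setP => e; rewrite !inE /removable.
apply/negP => /and3P[eS init_le term_le].
have in_uniq u (ue : (u, e.2) \in path_graph n k) : u = e.1.
  by apply: path_graph_in_uniq ue _; rewrite -surjective_pairing.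
have out_uniq w (ew : (e.1, w) \in path_graph n k) : w = e.2.
  by apply: path_graph_out_uniq ew _; rewrite -surjective_pairing.
move: init_le term_le.
rewrite card_initial_verticesD1 // card_terminal_verticesD1 //.
rewrite card_initial_vertices_path_graph // card_terminal_vertices_path_graph //.
lia.
Qed.

Theorem mainTheorem5 (x y n : nat) :
  (1 <= x)%N -> (1 <= y)%N -> x <> y -> (maxn x y <= n)%N ->
  (0 < process_prob x y (fun G : graph n => ~~ is_xy_tdg x y G))%R.
Proof.
move=> x_gt0 y_gt0 neq_xy le_n.
set k := n - minn x y.
have lt_kn : k < n by lia.
have card_S : n - k = minn x y by lia.
have card_init := card_initial_vertices_path_graph lt_kn.
have card_term := card_terminal_vertices_path_graph lt_kn.
apply: (process_prob_gt0 (S := path_graph n k)).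
- by rewrite card_init card_S geq_minl.
- by rewrite card_term card_S geq_minr.
- exact: removable_set_path_graph.
- by rewrite /is_xy_tdg card_init card_term card_S; apply/negP => /and3P[_ /eqP + /eqP]; lia.
- exact: path_graph_sub_complete_dag.
Qed.
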